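(* Let $\odot$ be a pseudo-multiplication on $[0,\infty]$ with left identity $1_{\odot}$, and let $F_{\odot}$ be the set of $\odot$-finite elements. The following conditions are equivalent: (1) $\odot$ is non-degenerate, i.e. $1_{\odot}$ is $\odot$-finite; (2) there exists some $t>0$ that is $\odot$-finite; (3) the monoid $([0,1_{\odot}],\odot)$ is commutative; (4) $F_{\odot}$ is either $[0,\infty]$ or of the form $[0,\phi)$ for some $\phi\in(1_{\odot},\infty]$. Moreover, if $F_{\odot}=[0,\phi)$, then $O(\phi)=\phi$ and $t\odot\phi=\phi\odot t=\phi$ for all $0<t\leqslant\phi$; in particular $\phi\odot\phi=\phi$.
   Context: A pseudo-multiplication is a binary operation $\odot:[0,\infty]\times[0,\infty]\to[0,\infty]$ such that: $\odot$ is associative; $\odot$ is continuous on $(0,\infty)\times[0,\infty]$; for every $t$, the map $s\mapsto s\odot t$ is continuous on $(0,\infty]$; $\odot$ is nondecreasing in each argument; there is a left identity element $1_{\odot}$, i.e. $1_{\odot}\odot t=t$ for all $t$; there are no zero divisors, i.e. $s\odot t=0$ implies $s=0$ or $t=0$; and $0$ is an annihilator, i.e. $0\odot t=t\odot 0=0$ for all $t$. For $t\in[0,\infty]$ put $O(t)=\inf_{s>0} s\odot t$. An element $t$ is called $\odot$-finite if $O(t)=0$, and $\odot$-infinite otherwise. The pseudo-multiplication $\odot$ is called non-degenerate if $O(1_{\odot})=0$. *)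

From HB Require Import structures.
From mathcomp Require Import all_boot all_order all_algebra.
From mathcomp Require Import all_classical all_reals all_analysis.
Set Implicit Arguments. Unset Strict Implicit. Unset Printing Implicit Defensive.
Import Order.TTheory GRing.Theory Num.Theory.
Local Open Scope classical_set_scope.
Local Open Scope ereal_scope.

Definition nnE (R : realType) : set (\bar R) := [set x | 0 <= x].

(* A pseudo-multiplication on [0,oo] (values outside [0,oo] are irrelevant)
   with left identity [one]. *)
Record is_pseudo_mult (R : realType) (op : \bar R -> \bar R -> \bar R)
    (one : \bar R) : Prop := IsPseudoMult {
  pm_range : forall s t, 0 <= s -> 0 <= t -> 0 <= op s t;
  pm_assoc : forall s t u, 0 <= s -> 0 <= t -> 0 <= u ->
    op (op s t) u = op s (op t u);
  pm_cont : {within [set p : \bar R * \bar R | 0 < p.1 < +oo /\ 0 <= p.2],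
         continuous (fun p : \bar R * \bar R => op p.1 p.2)};
  pm_cont_left : forall t, 0 <= t ->
    {within [set s : \bar R | 0 < s], continuous (fun s => op s t)};
  pm_mono_l : forall s s' t, 0 <= s -> s <= s' -> 0 <= t -> op s t <= op s' t;
  pm_mono_r : forall s t t', 0 <= s -> 0 <= t -> t <= t' -> op s t <= op s t';
  pm_one_ge0 : 0 <= one;
  pm_one_l : forall t, 0 <= t -> op one t = t;
  pm_nozd : forall s t, 0 <= s -> 0 <= t -> op s t = 0 -> s = 0 \/ t = 0;
  pm_0l : forall t, 0 <= t -> op 0 t = 0;
  pm_0r : forall t, 0 <= t -> op t 0 = 0 }.

Definition Ofun (R : realType) (op : \bar R -> \bar R -> \bar R) (t : \bar R) : \bar R :=
  ereal_inf [set op s t | s in [set s : \bar R | 0 < s]].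

Definition odot_finite (R : realType) (op : \bar R -> \bar R -> \bar R) : set (\bar R) :=
  [set t | 0 <= t /\ Ofun op t = 0].

From HB Require Import structures.
From mathcomp Require Import all_boot all_order all_algebra.
From mathcomp Require Import all_classical all_reals all_analysis.
From mathcomp Require Import lra.
Set Implicit Arguments. Unset Strict Implicit. Unset Printing Implicit Defensive.
Import Order.TTheory GRing.Theory Num.Theory.
Local Open Scope classical_set_scope.
Local Open Scope ereal_scope.

(* Writing 1 for [one]: if some t > 0 is finite then O(1) * t <= O(t) = 0,
   so 1 is finite.  The finite elements form a down-set closed under the
   operation; its supremum phi, if attained and finite, would satisfy
   phi <= O(phi) = 0, whence (4).  When F = [0, phi), O(phi) is not finite, so
   O(phi) = phi and s * phi >= phi for all s > 0; conversely t * phi <= phi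
   for t < phi, as t * phi is a limit of the finite elements t * v, v < phi.

   When O(1) = 0, the intermediate value theorem
   makes every idempotent a <= 1 a two-sided unit of [0, a]; in particular 1
   is a right unit of [0, 1].  For 0 < s <= t < 1 take iterated square roots
   z_k of t, so that t = z_k^(2^k) commutes with all powers of z_k.  If the
   powers t^n stay above s, their infimum is an idempotent between s and t
   and s * t = s = t * s.  Otherwise the power z_k^m just above s puts both
   s * t and t * s between z_k^(m + 2^k) * z_k and z_k^(m + 2^k); as k grows
   these bounds meet, because the supremum of the z_k is an idempotent and
   hence a right unit for s * t and t * s. *)

Section ereal_order_topology.
Variable R : realType.

Lemma nbhs_ereal_below_pos (P : set (\bar R)) (c : \bar R) :
  0 < c -> nbhs c P -> exists u : \bar R, [/\ 0 < u < c, u < +oo & P u].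
Proof.
case: c => [r||] // r0.
- rewrite lte_fin in r0 => /nbhs_EFin Pr.
  have : \forall y \near r^'-, [/\ (0 < y)%R, (y < r)%R & P y%:E].
    near=> y; split; [near: y; exact: nbhs_left_gt|near: y; exact: nbhs_left_lt|].
    by near: y; apply: cvg_within; exact: Pr.
  by move=> /filter_ex[y [y0 yr Py]]; exists y%:E; rewrite !lte_fin y0 yr ltry.
- move=> /nbhs_ereal_pinfty[_ [M [Mr HM]]].
  have M_le_max : (M <= Num.max M 0)%R by rewrite le_max lexx.
  have max_ge0 : (0 <= Num.max M 0)%R by rewrite le_max lexx orbT.
  exists (Num.max M 0 + 1)%:E; split; [|exact: ltry|].
  + by rewrite ltry andbT lte_fin; lra.
  + by apply: HM; lra.
Unshelve. all: by end_near.
Qed.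

Lemma nbhs_EFin_above (P : set (\bar R)) (r : R) :
  nbhs r%:E P -> exists u : \bar R, [/\ r%:E < u, u < +oo & P u].
Proof.
move=> /nbhs_EFin Pr.
have : \forall y \near r^'+, (r < y)%R /\ P y%:E.
  near=> y; split; first by near: y; exact: nbhs_right_gt.
  by near: y; apply: cvg_within; exact: Pr.
by move=> /filter_ex[y [ry Py]]; exists y%:E; rewrite lte_fin ry ltry.
Unshelve. all: by end_near.
Qed.

(* The two one-sided hypotheses are what continuity from the left and from
   the right provide for a nondecreasing [g]. *)
Lemma nondecreasing_ivt (g : \bar R -> \bar R) (p q y : \bar R) :
  p <= q ->
  (forall u v, p <= u -> u <= v -> v <= q -> g u <= g v) ->
  (forall c y', p < c -> c <= q -> y' < g c ->
     exists u, [/\ u < c, p <= u & y' < g u]) ->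
  (forall c y', p <= c -> c < q -> g c < y' ->
     exists u, [/\ c < u, u <= q & g u < y']) ->
  g p <= y -> y <= g q -> exists c, p <= c <= q /\ g c = y.
Proof.
move=> pq g_mono g_left g_right gp gq.
set S := [set u | p <= u <= q /\ g u <= y]; set c := ereal_sup S.
have pc : p <= c by apply: ereal_sup_ubound; rewrite /S /= lexx pq.
have cq : c <= q by apply: ge_ereal_sup => u [/andP[]].
exists c; rewrite pc cq; split => //; apply/eqP; rewrite eq_le; apply/andP; split.
  have [<-//|pc'] := eqVneq p c.
  rewrite leNgt; apply/negP => /(g_left c y) [|//|u [uc pu yu]].
    by rewrite lt_neqAle pc' pc.
  have [u' [/andP[_ u'q] gu'] uu'] := ereal_sup_gt uc.
  by have := lt_le_trans yu (g_mono u u' pu (ltW uu') u'q); rewrite ltNge gu'.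
have [->//|cq'] := eqVneq c q.
rewrite leNgt; apply/negP => /(g_right c y) [//||u [cu uq gu]].
  by rewrite lt_neqAle cq' cq.
have : S u by rewrite /S /= uq (le_trans pc (ltW cu)) (ltW gu).
by move=> /ereal_sup_ubound; rewrite -/c leNgt cu.
Qed.

End ereal_order_topology.

Lemma crossing_index d (T : orderType d) (g : nat -> T) (s : T) N :
  (s <= g 0%N)%O -> (g N < s)%O -> exists m, (s <= g m)%O /\ (g m.+1 < s)%O.
Proof.
move=> sg0; elim: N => [|N IH] gN; first by have := le_lt_trans sg0 gN; rewrite ltxx.
by have [sgN|/IH] := leP s (g N); [exists N|].
Qed.

Section pseudo_multiplication.
Variables (R : realType) (op : \bar R -> \bar R -> \bar R) (one : \bar R).
Hypothesis H : is_pseudo_mult op one.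
Local Notation O := (Ofun op).
Local Notation F := (odot_finite op).
Implicit Types (a c s t u v w x y : \bar R).

Lemma one_gt0 : 0 < one.
Proof.
rewrite lt_def (pm_one_ge0 H) andbT; apply/eqP => one0.
have := pm_one_l H (@lee01 R); rewrite one0 (pm_0l H) ?lee01 // => /eqP.
by rewrite eq_sym onee_eq0.
Qed.

Lemma le_op (u u' v v' : \bar R) :
  0 <= u -> u <= u' -> 0 <= v -> v <= v' -> op u v <= op u' v'.
Proof.
move=> u0 uu' v0 vv'; apply: le_trans (pm_mono_r H u0 v0 vv') _.
exact: (pm_mono_l H u0 uu' (le_trans v0 vv')).
Qed.

Lemma op_gt0 s t : 0 < s -> 0 < t -> 0 < op s t.
Proof.
move=> s0 t0; rewrite lt_def (pm_range H (ltW s0) (ltW t0)) andbT.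
by apply/eqP => /(pm_nozd H (ltW s0) (ltW t0)) [] e; [move: s0|move: t0];
  rewrite e ltxx.
Qed.

Lemma opl_gt_below t c y : 0 <= t -> 0 < c -> y < op c t ->
  exists u, [/\ 0 < u < c, u < +oo & y < op u t].
Proof.
move=> t0 c0 yc.
have := @pm_cont_left R op one H t t0 c _ (open_ereal_gt' yc) => cont.
have : within [set s | 0 < s] (nbhs c) [set u | y < op u t].
  by rewrite nbhs_subspace_in //; exact: cont.
move=> /nbhs_ereal_below_pos[//|u [/andP[u0 uc] uoo yu]].
by exists u; rewrite u0 uc; split => //; exact: yu.
Qed.

Lemma opl_lt_above t c y : 0 <= t -> 0 < c -> c < +oo -> op c t < y ->
  exists u, [/\ c < u, u < +oo & op u t < y].
Proof.
move=> t0 c0 coo cy.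
have := @pm_cont_left R op one H t t0 c _ (open_ereal_lt' cy) => cont.
have : within [set s | 0 < s] (nbhs c) [set u | op u t < y].
  by rewrite nbhs_subspace_in //; exact: cont.
case: c c0 coo {cy cont} => [r||] // c0 _ /nbhs_EFin_above[u [cu uoo uy]].
by exists u; split => //; apply: uy; exact: lt_trans cu.
Qed.

Lemma opr_nbhs s c (Q : set (\bar R)) : 0 < s < +oo -> 0 <= c ->
  nbhs (op s c) Q -> nbhs c (fun v => 0 <= v -> Q (op s v)).
Proof.
move=> s_pos c0 Q_sc.
have := @pm_cont R op one H (s, c) _ Q_sc => cont.
have : within [set p : \bar R * \bar R | 0 < p.1 < +oo /\ 0 <= p.2]
    (nbhs (s, c)) [set p | Q (op p.1 p.2)].
  by rewrite nbhs_subspace_in //; exact: cont.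
have pair_cvg : (fun v => (s, v)) @ nbhs c --> (s, c).
  by apply: cvg_pair; [exact: cvg_cst|exact: cvg_id].
move=> /pair_cvg near_c.
have {}near_c : nbhs c (fun v => 0 < s < +oo /\ 0 <= v -> Q (op s v)) := near_c.
by apply: filterS near_c => v Qv v0; apply: Qv.
Qed.

Lemma opr_gt_below s c y : 0 < s < +oo -> 0 < c -> y < op s c ->
  exists v, [/\ 0 < v < c, v < +oo & y < op s v].
Proof.
move=> s_pos c0 yc.
have := opr_nbhs s_pos (ltW c0) (open_ereal_gt' yc).
move=> /nbhs_ereal_below_pos[//|v [/andP[v0 vc] voo yv]].
by exists v; rewrite v0 vc; split => //; exact/yv/ltW.
Qed.

Lemma opr_lt_above s c y : 0 < s < +oo -> 0 <= c -> c < +oo -> op s c < y ->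
  exists v, [/\ c < v, v < +oo & op s v < y].
Proof.
move=> s_pos c0 coo cy.
have := opr_nbhs s_pos c0 (open_ereal_lt' cy).
case: c c0 coo {cy} => [r||] // c0 _ /nbhs_EFin_above[v [cv voo vy]].
by exists v; split => //; apply: vy; exact: le_trans (ltW cv).
Qed.

Lemma Ofun_le_op s t : 0 < s -> O t <= op s t.
Proof. by move=> s0; apply: ereal_inf_lbound; exists s. Qed.

Lemma Ofun_ge y t : (forall s, 0 < s -> y <= op s t) -> y <= O t.
Proof. by move=> le_y; apply: le_ereal_inf_tmp => _ [s s0 <-]; exact: le_y. Qed.

Lemma Ofun_lt_op y t : O t < y -> exists s, 0 < s /\ op s t < y.
Proof. by move=> /ereal_inf_lt[_ [s s0 <-] sty]; exists s. Qed.

Lemma Ofun_ge0 t : 0 <= t -> 0 <= O t.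
Proof. by move=> t0; apply: Ofun_ge => s s0; exact: (pm_range H (ltW s0) t0). Qed.

Lemma Ofun_le t : 0 <= t -> O t <= t.
Proof.
by move=> t0; rewrite -{2}(pm_one_l H t0); exact: Ofun_le_op one_gt0.
Qed.

Lemma le_Ofun t t' : 0 <= t -> t <= t' -> O t <= O t'.
Proof.
move=> t0 tt'; apply: Ofun_ge => s s0; apply: le_trans (Ofun_le_op _ s0) _.
exact: (pm_mono_r H (ltW s0) t0 tt').
Qed.

Lemma Ofun_le_opr s t : 0 <= t -> 0 < s -> O t <= op s (O t).
Proof.
move=> t0 s0; have Ot0 := Ofun_ge0 t0.
have O_le_sst s' : 0 < s' -> O t <= op s (op s' t).
  move=> s'0; rewrite -(pm_assoc H (ltW s0) (ltW s'0) t0).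
  exact/Ofun_le_op/op_gt0.
have [|soo] := leP +oo s.
  rewrite leye_eq => /eqP ->; rewrite -{1}(pm_one_l H Ot0).
  exact: (pm_mono_l H (ltW one_gt0) (leey _) Ot0).
have [|Otoo] := leP +oo (O t).
  rewrite leye_eq => /eqP Ot_oo.
  have t_oo : t = +oo by apply/eqP; rewrite -leye_eq -Ot_oo Ofun_le.
  rewrite [X in op s X](_ : _ = op one t); first exact: O_le_sst one_gt0.
  by rewrite (pm_one_l H t0) Ot_oo t_oo.
rewrite leNgt; apply/negP => /(opr_lt_above _ Ot0 Otoo) [|v [Otv _ svOt]].
  by rewrite s0 soo.
have [s' [s'0 s't]] := Ofun_lt_op Otv.
have := pm_mono_r H (ltW s0) (pm_range H (ltW s'0) t0) (ltW s't).
by move=> /(le_trans (O_le_sst s' s'0)); rewrite leNgt svOt.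
Qed.

Lemma OfunK t : 0 <= t -> O (O t) = O t.
Proof.
move=> t0; apply/eqP; rewrite eq_le Ofun_le ?Ofun_ge0 //=.
by apply: Ofun_ge => s s0; exact: Ofun_le_opr.
Qed.

Lemma finite0 : F 0.
Proof. by split => //; apply/eqP; rewrite eq_le Ofun_ge0 // Ofun_le. Qed.

Lemma finite_le x y : 0 <= x -> x <= y -> F y -> F x.
Proof.
move=> x0 xy [y0 Oy]; split => //; apply/eqP.
by rewrite eq_le Ofun_ge0 // andbT -Oy le_Ofun.
Qed.

Lemma finite_lt_notfinite x y : 0 <= x -> ~ F x -> F y -> y < x.
Proof.
move=> x0 nFx Fy; rewrite ltNge; apply/negP => xy.
exact/nFx/(finite_le x0 xy).
Qed.

Lemma Ofun_notfinite t : 0 <= t -> ~ F t -> ~ F (O t).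
Proof. by move=> t0 nFt [_ OOt]; apply: nFt; split; last rewrite -OOt OfunK. Qed.

Lemma finite_op s t : F s -> F t -> F (op s t).
Proof.
move=> [s0 Os] [t0 Ot]; have st0 := pm_range H s0 t0.
split => //; apply/eqP; rewrite eq_le Ofun_ge0 // andbT.
apply/lee_addgt0Pr => e e0; rewrite add0e.
have [a [a0 /ltW ate]] : exists a, 0 < a /\ op a t < e%:E.
  by apply: Ofun_lt_op; rewrite Ot lte_fin.
have [u [u0 usa]] : exists u, 0 < u /\ op u s < a.
  by apply: Ofun_lt_op; rewrite Os.
apply: le_trans (Ofun_le_op _ u0) _; rewrite -(pm_assoc H (ltW u0) s0 t0).
by apply: le_trans ate; exact: (pm_mono_l H (pm_range H (ltW u0) s0) (ltW usa) t0).
Qed.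

Section finite_bound.
Variable phi : \bar R.
Hypothesis F_phi : F = [set t | 0 <= t < phi].

Let finiteE x : F x <-> 0 <= x < phi. Proof. by rewrite F_phi. Qed.

Lemma finite_bound_gt0 : 0 < phi.
Proof. by have /finiteE/andP[] := finite0. Qed.

Lemma finite_bound_notfinite : ~ F phi.
Proof. by move/finiteE; rewrite ltxx andbF. Qed.

Lemma Ofun_finite_bound : O phi = phi.
Proof.
have phi0 := ltW finite_bound_gt0.
apply/eqP; rewrite eq_le Ofun_le //= leNgt; apply/negP => Ophi.
by apply: (Ofun_notfinite phi0 finite_bound_notfinite); apply/finiteE; rewrite Ofun_ge0.
Qed.

Lemma finite_bound_le_op s : 0 < s -> phi <= op s phi.
Proof. by move=> s0; rewrite -{1}Ofun_finite_bound; exact: Ofun_le_op. Qed.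

Lemma opl_finite_bound_lt t : 0 < t < phi -> op t phi = phi.
Proof.
move=> /andP[t0 tphi]; apply/eqP; rewrite eq_le finite_bound_le_op // andbT.
rewrite leNgt; apply/negP => /(opr_gt_below _ finite_bound_gt0) [|v [/andP[v0 vphi] _]].
  by rewrite t0 (lt_le_trans tphi (leey _)).
have /finiteE/andP[_] : F (op t v).
  by apply: finite_op; apply/finiteE; rewrite ?(ltW t0) ?(ltW v0) ?tphi ?vphi.
by move=> /lt_trans/[apply]; rewrite ltxx.
Qed.

Lemma op_finite_bound_idem : op phi phi = phi.
Proof.
have phi0 := finite_bound_gt0.
apply/eqP; rewrite eq_le finite_bound_le_op // andbT.
rewrite leNgt; apply/negP => /(opl_gt_below (ltW phi0) phi0) [u [u_pos _]].
by rewrite opl_finite_bound_lt // ltxx.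
Qed.

Lemma opl_finite_bound t : 0 < t <= phi -> op t phi = phi.
Proof.
move=> /andP[t0]; rewrite le_eqVlt => /predU1P[->|tphi].
  exact: op_finite_bound_idem.
by apply: opl_finite_bound_lt; rewrite t0.
Qed.

Lemma opr_finite_bound t : 0 < t <= phi -> op phi t = phi.
Proof.
move=> /andP[t0 tphi]; have phi0 := finite_bound_gt0.
apply/eqP; rewrite eq_le; apply/andP; split.
  by rewrite -{2}op_finite_bound_idem; exact: (pm_mono_r H (ltW phi0) (ltW t0) tphi).
have pt0 := op_gt0 phi0 t0.
have pt_le_O : op phi t <= O (op phi t).
  apply: Ofun_ge => s s0; rewrite -(pm_assoc H (ltW s0) (ltW phi0) (ltW t0)).
  exact: (pm_mono_l H (ltW phi0) (finite_bound_le_op s0) (ltW t0)).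
rewrite leNgt; apply/negP => pt_phi.
have [_] : F (op phi t) by apply/finiteE; rewrite (ltW pt0) pt_phi.
by move=> Opt; move: pt_le_O; rewrite Opt leNgt pt0.
Qed.

End finite_bound.

Lemma le_Ofun_of_above a : 0 <= a < +oo -> (forall v, a < v -> a <= O v) -> a <= O a.
Proof.
move=> /andP[a0 aoo] a_le_O; apply: Ofun_ge => s s0.
have [|soo] := leP +oo s.
  rewrite leye_eq => /eqP ->; rewrite -{1}(pm_one_l H a0).
  exact: (pm_mono_l H (ltW one_gt0) (leey _) a0).
rewrite leNgt; apply/negP => /(opr_lt_above _ a0 aoo) [|v [av _ sva]].
  by rewrite s0 soo.
have v0 := le_trans a0 (ltW av).
have := pm_mono_r H (ltW s0) (Ofun_ge0 v0) (Ofun_le v0).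
move=> /(le_trans (Ofun_le_opr v0 s0)) /(le_trans (a_le_O v av)).
by rewrite leNgt sva.
Qed.

Lemma finite_interval : O one = 0 ->
  F = [set t | 0 <= t] \/ exists phi, one < phi /\ F = [set t | 0 <= t < phi].
Proof.
move=> O1; have F1 : F one by split; [exact: (pm_one_ge0 H)|].
set phi := ereal_sup F.
have F_le_phi x : F x -> x <= phi by move=> Fx; apply: ereal_sup_ubound.
have F_lt_phi x : 0 <= x < phi -> F x.
  by move=> /andP[x0 /ereal_sup_gt[y Fy xy]]; exact: finite_le x0 (ltW xy) Fy.
have one_phi := F_le_phi one F1.
have [Fphi|nFphi] := pselect (F phi); last first.
  have F_neq_phi x : F x -> x != phi by move=> Fx; apply/eqP => xphi; rewrite xphi in Fx.
  right; exists phi; split; first by rewrite lt_neqAle one_phi F_neq_phi.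
  apply/seteqP; split => x /=; last exact: F_lt_phi.
  by move=> Fx; rewrite Fx.1 lt_neqAle F_neq_phi // F_le_phi.
have phi_oo : phi = +oo.
  apply/eqP; rewrite -leye_eq leNgt; apply/negP => phi_fin.
  have phi0 : 0 < phi := lt_le_trans one_gt0 one_phi.
  have : phi <= O phi.
    apply: le_Ofun_of_above; first by rewrite (ltW phi0).
    move=> v phiv; have v0 := ltW (lt_trans phi0 phiv).
    have nFv : ~ F v by move/F_le_phi; rewrite leNgt phiv.
    exact/ltW/(finite_lt_notfinite (Ofun_ge0 v0) (Ofun_notfinite v0 nFv)).
  by rewrite Fphi.2 leNgt phi0.
left; apply/seteqP; split => x; first by case.
by move=> /= x0; apply: finite_le x0 (leey _) _; rewrite -phi_oo.
Qed.

Lemma nondegenerate_of_finite_pos t : 0 < t -> O t = 0 -> O one = 0.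
Proof.
move=> t0 Ot; have O1_0 := Ofun_ge0 (pm_one_ge0 H).
have : op (O one) t <= O t.
  apply: Ofun_ge => s s0; rewrite -{2}(pm_one_l H (ltW t0)).
  rewrite -(pm_assoc H (ltW s0) (pm_one_ge0 H) (ltW t0)).
  exact: (pm_mono_l H O1_0 (Ofun_le_op one s0) (ltW t0)).
rewrite Ot => O1t_le0.
have /(pm_nozd H O1_0 (ltW t0)) [//|t_eq0] : op (O one) t = 0.
  by apply/eqP; rewrite eq_le O1t_le0 (pm_range H O1_0 (ltW t0)).
by move: t0; rewrite t_eq0 ltxx.
Qed.

Lemma nondegenerate_of_comm :
  (forall s t, 0 <= s <= one -> 0 <= t <= one -> op s t = op t s) -> O one = 0.
Proof.
move=> comm; apply/eqP; rewrite eq_le Ofun_ge0 ?(pm_one_ge0 H) // andbT.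
apply/lee_addgt0Pr => e e0; rewrite add0e.
set s := Order.min one e%:E.
have s0 : 0 < s by rewrite lt_min one_gt0 lte_fin.
apply: le_trans (Ofun_le_op one s0) _.
rewrite comm ?(ltW s0) ?ge_min ?lexx ?(ltW one_gt0) // (pm_one_l H (ltW s0)).
by rewrite ge_min lexx orbT.
Qed.

Lemma opl_onto a x : 0 < a -> O a = 0 -> 0 < x -> x <= op a a ->
  exists u, 0 < u <= a /\ op u a = x.
Proof.
move=> a0 Oa x0 xaa.
have [p [p0 pax]] : exists p, 0 < p /\ op p a < x by apply: Ofun_lt_op; rewrite Oa.
have pa : p < a.
  rewrite ltNge; apply/negP => ap; have := pm_mono_l H (ltW a0) ap (ltW a0).
  by move=> /le_lt_trans/(_ pax)/lt_le_trans/(_ xaa); rewrite ltxx.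
have := @nondecreasing_ivt _ (op^~ a) p a x (ltW pa) _ _ _ (ltW pax) xaa; case.
- move=> u v pu uv _; exact: (pm_mono_l H (le_trans (ltW p0) pu) uv (ltW a0)).
- move=> c y pc _ yc.
  have [u [/andP[u0 uc] _ yu]] := opl_gt_below (ltW a0) (lt_trans p0 pc) yc.
  exists (Order.max u p); rewrite gt_max uc pc le_max lexx orbT; split => //.
  apply: lt_le_trans yu _; apply: (pm_mono_l H (ltW u0) _ (ltW a0)).
  by rewrite le_max lexx.
- move=> c y pc ca cy; have c0 := lt_le_trans p0 pc.
  have [u [cu _ uy]] := opl_lt_above (ltW a0) c0 (lt_le_trans ca (leey _)) cy.
  exists (Order.min u a); rewrite lt_min cu ca ge_min lexx orbT; split => //.
  apply: le_lt_trans _ uy; apply: (pm_mono_l H _ _ (ltW a0)).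
    by rewrite le_min (ltW (lt_trans c0 cu)) (ltW a0).
  by rewrite ge_min lexx.
- by move=> u [/andP[pu ua] uax]; exists u; rewrite (lt_le_trans p0 pu) ua.
Qed.

Lemma opr_onto a x : 0 < a < +oo -> 0 <= x <= op a a ->
  exists w, 0 <= w <= a /\ op a w = x.
Proof.
move=> a_pos /andP[x0 xaa]; have /andP[a0 aoo] := a_pos.
have := @nondecreasing_ivt _ (op a) 0 a x (ltW a0) _ _ _ _ xaa; case.
- move=> u v u0 uv _; exact: (pm_mono_r H (ltW a0) u0 uv).
- move=> c y c0 _ yc.
  have [v [/andP[v0 vc] _ yv]] := opr_gt_below a_pos c0 yc.
  by exists v; rewrite vc (ltW v0).
- move=> c y c0 ca cy.
  have [v [cv _ vy]] := opr_lt_above a_pos c0 (lt_trans ca aoo) cy.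
  exists (Order.min v a); rewrite lt_min cv ca ge_min lexx orbT; split => //.
  apply: le_lt_trans _ vy; apply: (pm_mono_r H (ltW a0)).
    by rewrite le_min (ltW (le_lt_trans c0 cv)) (ltW a0).
  by rewrite ge_min lexx.
- by rewrite (pm_0r H (ltW a0)).
- by move=> w [w_in awx]; exists w.
Qed.

Lemma idem_unitr a x : 0 < a -> O a = 0 -> op a a = a -> 0 <= x <= a ->
  op x a = x.
Proof.
move=> a0 Oa aa /andP[x0 xa].
have [<-|x_neq0] := eqVneq 0 x; first exact: (pm_0l H (ltW a0)).
have [u [/andP[u0 _] <-]] : exists u, 0 < u <= a /\ op u a = x.
  by apply: opl_onto; rewrite ?aa // lt_neqAle x_neq0.
by rewrite (pm_assoc H (ltW u0) (ltW a0) (ltW a0)) aa.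
Qed.

Lemma idem_unitl a x : 0 < a < +oo -> op a a = a -> 0 <= x <= a -> op a x = x.
Proof.
move=> a_pos aa /andP[x0 xa]; have /andP[/ltW a0 _] := a_pos.
have [w [/andP[w0 _] <-]] : exists w, 0 <= w <= a /\ op a w = x.
  by apply: opr_onto; rewrite // x0 aa.
by rewrite -(pm_assoc H a0 a0 w0) aa.
Qed.

Lemma op_diag_gt_below c y : 0 < c -> y < op c c ->
  exists u, 0 < u < c /\ y < op u u.
Proof.
move=> c0 yc.
have [u [/andP[u0 uc] uoo yu]] := opl_gt_below (ltW c0) c0 yc.
have [v [/andP[v0 vc] _ yv]] : exists v, [/\ 0 < v < c, v < +oo & y < op u v].
  by apply: opr_gt_below; rewrite ?u0.
exists (Order.max u v); rewrite gt_max uc vc lt_max u0; split => //.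
by apply: lt_le_trans yv _; apply: le_op; rewrite ?(ltW u0) ?(ltW v0) ?le_max ?lexx ?orbT.
Qed.

Lemma op_diag_lt_above c y : 0 < c < +oo -> op c c < y ->
  exists u, c < u < +oo /\ op u u < y.
Proof.
move=> c_pos cy; have /andP[c0 coo] := c_pos.
have [v [cv voo cvy]] := opr_lt_above c_pos (ltW c0) coo cy.
have [u [cu uoo uvy]] := opl_lt_above (ltW (lt_trans c0 cv)) c0 coo cvy.
exists (Order.min u v); rewrite lt_min cu cv gt_min uoo; split => //.
have m0 : 0 <= Order.min u v.
  by rewrite le_min (ltW (lt_trans c0 cu)) (ltW (lt_trans c0 cv)).
by apply: le_lt_trans uvy; apply: le_op => //; rewrite ge_min lexx ?orbT.
Qed.

Lemma le_of_sup_chain (z : nat -> \bar R) x y : 0 < x < +oo ->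
  0 < ereal_sup (range z) -> op x (ereal_sup (range z)) = x ->
  (forall k, exists2 w, x <= w & op w (z k) <= y) -> x <= y.
Proof.
move=> x_pos L0 xL bracket; rewrite leNgt; apply/negP; rewrite -{1}xL.
move=> /(opr_gt_below x_pos L0) [v [/andP[v0 vL] _ yxv]].
have [_ [k _ <-] vz] := ereal_sup_gt vL.
have [w xw wzy] := bracket k; have /andP[/ltW x0 _] := x_pos.
have := le_op x0 xw (ltW v0) (ltW vz).
by move=> /(lt_le_trans yxv)/lt_le_trans/(_ wzy); rewrite ltxx.
Qed.

Definition opow z n := iter n (op^~ z) one.

Lemma opowS z n : opow z n.+1 = op (opow z n) z.
Proof. by []. Qed.

Lemma opow1 z : 0 <= z -> opow z 1 = z.
Proof. exact: (pm_one_l H). Qed.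

Lemma opow_ge0 z n : 0 <= z -> 0 <= opow z n.
Proof.
move=> z0; elim: n => [|n IH]; first exact: (pm_one_ge0 H).
by rewrite opowS; exact: (pm_range H IH z0).
Qed.

Section nondegenerate.
Hypothesis O1 : O one = 0.

Lemma Ofun_le_one x : 0 <= x <= one -> O x = 0.
Proof.
move=> /andP[x0 x1]; apply/eqP; rewrite eq_le Ofun_ge0 // andbT -O1.
exact: le_Ofun.
Qed.

Lemma op_one_r x : 0 <= x <= one -> op x one = x.
Proof. exact: idem_unitr one_gt0 O1 (pm_one_l H (pm_one_ge0 H)). Qed.

Lemma op_sqrt y : 0 < y < one -> exists z, y <= z < one /\ op z z = y.
Proof.
move=> /andP[y0 y1]; have one0 := one_gt0.
have := @nondecreasing_ivt _ (fun z => op z z) y one y (ltW y1) _ _ _ _ _; case.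
- move=> u v yu uv _; have u0 := le_trans (ltW y0) yu; exact: le_op.
- move=> c y' yc _ /(op_diag_gt_below (lt_trans y0 yc)) [u [/andP[u0 uc] y'u]].
  exists (Order.max u y); rewrite gt_max uc yc le_max lexx orbT; split => //.
  have m0 : 0 <= Order.max u y by rewrite le_max (ltW u0).
  by apply: lt_le_trans y'u _; apply: le_op; rewrite ?(ltW u0) ?le_max ?lexx.
- move=> c y' yc c1 /op_diag_lt_above [|u [/andP[cu _] uy']].
    by rewrite (lt_le_trans y0 yc) (lt_le_trans c1 (leey _)).
  exists (Order.min u one); rewrite lt_min cu c1 ge_min lexx orbT; split => //.
  have m0 : 0 <= Order.min u one.
    by rewrite le_min (ltW (lt_le_trans y0 (le_trans yc (ltW cu)))) (ltW one0).
  by apply: le_lt_trans uy'; apply: le_op => //; rewrite ge_min lexx.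
- apply: le_trans (pm_mono_r H (ltW y0) (ltW y0) (ltW y1)) _.
  by rewrite op_one_r // (ltW y0) (ltW y1).
- by rewrite (pm_one_l H (ltW one0)) (ltW y1).
- move=> z [/andP[yz z1] zzy]; exists z; rewrite yz lt_neqAle z1 andbT.
  split => //; apply/eqP => z_one.
  by move: zzy y1; rewrite z_one (pm_one_l H (ltW one0)) => ->; rewrite ltxx.
Qed.

Lemma opow_le1 z n : 0 <= z <= one -> opow z n <= one.
Proof.
move=> /andP[z0 z1]; elim: n => [|n IH]; first exact: lexx.
rewrite opowS; apply: le_trans (pm_mono_r H (opow_ge0 n z0) z0 z1) _.
by rewrite op_one_r // opow_ge0.
Qed.

Lemma opowD z m n : 0 <= z <= one -> opow z (m + n) = op (opow z m) (opow z n).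
Proof.
move=> z01; have /andP[z0 _] := z01.
elim: n => [|n IH]; first by rewrite addn0 op_one_r // opow_ge0 // opow_le1.
by rewrite addnS !opowS IH (pm_assoc H (opow_ge0 _ z0) (opow_ge0 _ z0) z0).
Qed.

Lemma opowM z m n : 0 <= z <= one -> opow z (m * n) = opow (opow z m) n.
Proof.
by move=> z01; elim: n => [|n IH]; rewrite ?muln0 // mulnS addnC opowD // IH.
Qed.

Lemma sqrt_chain t : 0 < t < one -> exists z : nat -> \bar R,
  [/\ z 0%N = t, forall k, t <= z k < one & forall k, op (z k.+1) (z k.+1) = z k].
Proof.
move=> /andP[t0 t1].
have [f f_sqrt] : {f : \bar R -> \bar R & forall y,
    0 < y < one -> y <= f y < one /\ op (f y) (f y) = y}.
  apply: (@choice _ _ (fun y z => 0 < y < one -> y <= z < one /\ op z z = y)) => y.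
  have [/op_sqrt[z z_sqrt]|y_out] := pselect (0 < y < one).
    by exists z.
  by exists y.
have z_in k : 0 < iter k f t < one /\ t <= iter k f t.
  elim: k => [|k [/andP[z0 z1] tz]]; first by rewrite t0 t1 lexx.
  have [/andP[zf f1] _] := f_sqrt _ (introT andP (conj z0 z1)).
  by rewrite /= f1 (lt_le_trans z0 zf) (le_trans tz zf).
exists (fun k => iter k f t); split => // k.
  by have [/andP[_ ->] ->] := z_in k.
by have [/f_sqrt[_ zz] _] := z_in k.
Qed.

Lemma opow_sqrt_chain (z : nat -> \bar R) : (forall k, 0 <= z k <= one) ->
  (forall k, op (z k.+1) (z k.+1) = z k) -> forall k, opow (z k) (2 ^ k) = z 0%N.
Proof.
move=> z01 z_sq; elim => [|k <-]; first by rewrite opow1 //; case/andP: (z01 0%N).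
by rewrite expnS opowM // opowS opow1 ?z_sq //; case/andP: (z01 k.+1).
Qed.

Lemma sup_sqrt_chain_idem (z : nat -> \bar R) : (forall k, 0 <= z k <= one) ->
  (forall k, op (z k.+1) (z k.+1) = z k) ->
  op (ereal_sup (range z)) (ereal_sup (range z)) = ereal_sup (range z).
Proof.
move=> z01 z_sq; set L := ereal_sup (range z).
have zL k : z k <= L by apply: ereal_sup_ubound; exists k.
have L0 : 0 <= L by apply: le_trans (zL 0%N); case/andP: (z01 0%N).
have L1 : L <= one by apply: ge_ereal_sup => _ [k _ <-]; case/andP: (z01 k).
apply/eqP; rewrite eq_le; apply/andP; split.
  by apply: le_trans (pm_mono_r H L0 L0 L1) _; rewrite op_one_r ?L0.
apply: ge_ereal_sup => _ [k _ <-]; rewrite -z_sq.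
by have /andP[zk0 _] := z01 k.+1; apply: le_op; rewrite ?zL.
Qed.

Lemma inf_opow_idem t : 0 <= t < one -> 0 < ereal_inf (range (opow t)) ->
  op (ereal_inf (range (opow t))) (ereal_inf (range (opow t)))
  = ereal_inf (range (opow t)).
Proof.
move=> /andP[t0 t1]; set L := ereal_inf _ => L0.
have Lt n : L <= opow t n by apply: ereal_inf_lbound; exists n.
have t01 : 0 <= t <= one by rewrite t0 ltW.
have Loo : L < +oo.
  by apply: le_lt_trans (Lt 1%N) _; rewrite opow1 // (lt_le_trans t1 (leey _)).
apply/eqP; rewrite eq_le; apply/andP; split.
  apply: le_trans (pm_mono_r H (ltW L0) (ltW L0) (Lt 0%N)) _.
  by rewrite op_one_r ?(ltW L0) ?(Lt 0%N).
rewrite leNgt; apply/negP => /(opr_lt_above _ (ltW L0) Loo) [|v [Lv _ LvL]].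
  by rewrite L0 Loo.
have [u [Lu _ uvL]] := opl_lt_above (ltW (lt_trans L0 Lv)) L0 Loo LvL.
have [_ [i _ <-] tiu] := ereal_inf_lt Lu.
have [_ [j _ <-] tjv] := ereal_inf_lt Lv.
have := le_op (opow_ge0 i t0) (ltW tiu) (opow_ge0 j t0) (ltW tjv).
by rewrite -opowD // => /(le_trans (Lt (i + j)%N)); rewrite leNgt uvL.
Qed.

Lemma idem_op_comm a s t : 0 < a < +oo -> op a a = a -> 0 <= s <= a ->
  a <= t <= one -> op s t = s /\ op t s = s.
Proof.
move=> a_pos aa s_in /andP[a_le_t t1]; have /andP[a0 _] := a_pos.
have /andP[s0 sa] := s_in; have t0 := le_trans (ltW a0) a_le_t.
have s1 : 0 <= s <= one by rewrite s0 (le_trans sa (le_trans a_le_t t1)).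
have Oa : O a = 0 by apply: Ofun_le_one; rewrite (ltW a0) (le_trans a_le_t t1).
split; apply/eqP; rewrite eq_le; apply/andP; split.
- by rewrite -{2}(op_one_r s1); exact: (pm_mono_r H s0 t0 t1).
- by rewrite -{1}(idem_unitr a0 Oa aa s_in); exact: (pm_mono_r H s0 (ltW a0) a_le_t).
- by rewrite -{2}(pm_one_l H s0); exact: (pm_mono_l H t0 t1 s0).
- by rewrite -{1}(idem_unitl a_pos aa s_in); exact: (pm_mono_l H (ltW a0) a_le_t s0).
Qed.

Lemma opow_bracket w p s t n : 0 <= w <= one -> 0 <= s <= one ->
  opow w p = t -> opow t n < s ->
  exists W, [/\ op s t <= W, op t s <= W, op W w <= op s t & op W w <= op t s].
Proof.
move=> w01 /andP[s0 s1] wpt tns; have /andP[w0 _] := w01.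
have [m [s_wm wm1_s]] : exists m, s <= opow w m /\ opow w m.+1 < s.
  by apply: (crossing_index (N := p * n)); rewrite // opowM // wpt.
have t0 : 0 <= t by rewrite -wpt opow_ge0.
have W_l : opow w (m + p) = op (opow w m) t by rewrite opowD // wpt.
have W_r : opow w (m + p) = op t (opow w m) by rewrite addnC opowD // wpt.
have Ww_l : op (opow w (m + p)) w = op (opow w m.+1) t.
  by rewrite -opowS -addSn opowD // wpt.
have Ww_r : op (opow w (m + p)) w = op t (opow w m.+1).
  by rewrite -opowS -addSn addnC opowD // wpt.
exists (opow w (m + p)); split.
- by rewrite W_l; exact: (pm_mono_l H s0 s_wm t0).
- by rewrite W_r; exact: (pm_mono_r H t0 s0 s_wm).
- by rewrite Ww_l; exact: (pm_mono_l H (opow_ge0 _ w0) (ltW wm1_s) t0).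
- by rewrite Ww_r; exact: (pm_mono_r H t0 (opow_ge0 _ w0) (ltW wm1_s)).
Qed.

Lemma op_comm_crossing s t n : 0 < s -> s <= t -> t < one -> opow t n < s ->
  op s t = op t s.
Proof.
move=> s0 st t1 tns; have t0 := lt_le_trans s0 st.
have [z [z0 z_bnd z_sq]] : exists z : nat -> \bar R, [/\ z 0%N = t,
    forall k, t <= z k < one & forall k, op (z k.+1) (z k.+1) = z k].
  by apply: sqrt_chain; rewrite t0.
have z01 k : 0 <= z k <= one.
  by have /andP[tz z1] := z_bnd k; rewrite (le_trans (ltW t0) tz) ltW.
set L := ereal_sup (range z).
have tL : t <= L by rewrite -z0; apply: ereal_sup_ubound; exists 0%N.
have L1 : L <= one by apply: ge_ereal_sup => _ [k _ <-]; case/andP: (z01 k).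
have L0 : 0 < L := lt_le_trans t0 tL.
have OL : O L = 0 by apply: Ofun_le_one; rewrite (ltW L0) L1.
have LL : op L L = L := sup_sqrt_chain_idem z01 z_sq.
have s1 : 0 <= s <= one by rewrite (ltW s0) (le_trans st (ltW t1)).
have bracket k := opow_bracket (z01 k) s1 (etrans (opow_sqrt_chain z01 z_sq k) z0) tns.
have le_bracket x y : 0 < x <= t ->
    (forall k, exists2 W, x <= W & op W (z k) <= y) -> x <= y.
  move=> /andP[x0 xt]; apply: (@le_of_sup_chain z x y _ L0).
    by rewrite x0 (le_lt_trans xt (lt_le_trans t1 (leey _))).
  by apply: idem_unitr L0 OL LL _; rewrite (ltW x0) (le_trans xt tL).
have st_t : op s t <= t.
  rewrite -{2}(pm_one_l H (ltW t0)).
  exact: (pm_mono_l H (ltW s0) (andP s1).2 (ltW t0)).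
have ts_t : op t s <= t.
  rewrite -{2}(@op_one_r t); last by rewrite (ltW t0) ltW.
  exact: (pm_mono_r H (ltW t0) (ltW s0) (andP s1).2).
apply/eqP; rewrite eq_le; apply/andP; split; apply: le_bracket => [|k].
- by rewrite op_gt0 ?st_t.
- by have [W []] := bracket k; exists W.
- by rewrite op_gt0 ?ts_t.
- by have [W []] := bracket k; exists W.
Qed.

Lemma op_comm_inf s t : 0 < s -> s <= t -> t < one ->
  (forall n, s <= opow t n) -> op s t = op t s.
Proof.
move=> s0 st t1 s_le_tn; have t0 := lt_le_trans s0 st.
set L := ereal_inf (range (opow t)).
have sL : s <= L by apply: le_ereal_inf_tmp => _ [n _ <-]; exact: s_le_tn.
have Lt : L <= t by rewrite -[leRHS](opow1 (ltW t0)); apply: ereal_inf_lbound; exists 1%N.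
have L0 := lt_le_trans s0 sL.
have LL : op L L = L by apply: inf_opow_idem; rewrite ?(ltW t0).
have L_pos : 0 < L < +oo by rewrite L0 (le_lt_trans Lt (lt_le_trans t1 (leey _))).
have s_in : 0 <= s <= L by rewrite (ltW s0) sL.
have t_in : L <= t <= one by rewrite Lt ltW.
by have [-> ->] := idem_op_comm L_pos LL s_in t_in.
Qed.

Lemma op_comm_lt_one s t : 0 < s -> s <= t -> t < one -> op s t = op t s.
Proof.
move=> s0 st t1; have [[n tns]|/forallNP no_crossing] := pselect (exists n, opow t n < s).
  exact: op_comm_crossing tns.
by apply: op_comm_inf => // n; rewrite leNgt; apply/negP; exact: no_crossing.
Qed.

Lemma op_comm s t : 0 <= s <= one -> 0 <= t <= one -> op s t = op t s.
Proof.
wlog st : s t / s <= t.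
  move=> comm s01 t01; have [st|/ltW ts] := leP s t; first exact: comm.
  exact/esym/comm.
move=> s01 /andP[t0]; have /andP[s0 _] := s01.
rewrite le_eqVlt => /predU1P[->|t1]; first by rewrite (pm_one_l H s0) op_one_r.
have [<-|s_neq0] := eqVneq 0 s; first by rewrite (pm_0l H t0) (pm_0r H t0).
by apply: op_comm_lt_one; rewrite // lt_neqAle s_neq0.
Qed.

End nondegenerate.

End pseudo_multiplication.

Theorem theorem2p8 (R : realType) (op : \bar R -> \bar R -> \bar R) (one : \bar R) :
  is_pseudo_mult op one ->
  [<-> (* (1) non-degenerate *) Ofun op one = 0;
       (* (2) *) exists t, 0 < t /\ Ofun op t = 0;
       (* (3) ([0,one], op) commutative *)
         forall s t, 0 <= s <= one -> 0 <= t <= one -> op s t = op t s;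
       (* (4) *) odot_finite op = [set t | 0 <= t] \/
         exists phi, one < phi /\ odot_finite op = [set t | 0 <= t < phi]]
  /\ (forall phi, odot_finite op = [set t | 0 <= t < phi] ->
        [/\ Ofun op phi = phi,
            (forall t, 0 < t <= phi -> op t phi = phi /\ op phi t = phi) &
            op phi phi = phi]).
Proof.
move=> H; split.
  tfae.
  - by move=> O1; exists one; split; [exact: (one_gt0 H)|].
  - move=> [t [t0 Ot]]; apply: (op_comm H).
    exact: (nondegenerate_of_finite_pos H t0 Ot).
  - by move=> comm; apply: (finite_interval H); exact: (nondegenerate_of_comm H).
  - move=> F_eq; suff [] : odot_finite op one by [].
    case: F_eq => [->|[phi [one_phi ->]]] /=; first exact: (pm_one_ge0 H).
    by rewrite one_phi (pm_one_ge0 H).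
move=> phi F_phi.
split; [exact: (Ofun_finite_bound H F_phi) | | exact: (op_finite_bound_idem H F_phi)].
by move=> t t_in; split;
  [exact: (opl_finite_bound H F_phi) | exact: (opr_finite_bound H F_phi)].
Qed.
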